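(* Let $r\ge 3$ and $1\le \ell\le r-2$, let $G(r,\ell)$ be the graph obtained from $K_r\circ K_1$ by deleting $r-\ell$ leaves, and let $L$ denote the set of leaves of $G(r,\ell)$. Then $T\subseteq V(G(r,\ell))$ is a $\gamma_P$-irrelevant set of $G(r,\ell)$ if and only if $T\subseteq L$.
   Context: $K_r\circ K_1$ is the corona: $K_r$ with one pendant leaf attached to each vertex. Zero forcing: starting with a set $S$ of blue vertices, a blue vertex $v$ may turn blue a white vertex $w$ if $w$ is the only white neighbor of $v$; $S$ is a zero forcing set if repeated application colors all vertices blue. A set $S\subseteq V(G)$ is a power dominating set if its closed neighborhood $N[S]=\bigcup_{x\in S}(\{x\}\cup N(x))$ is a zero forcing set of $G$. A vertex is $\gamma_P$-irrelevant if it belongs to no minimal (under inclusion) power dominating set; a set is $\gamma_P$-irrelevant if all its vertices are. *)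

From mathcomp Require Import all_boot.
Set Implicit Arguments. Unset Strict Implicit. Unset Printing Implicit Defensive.

Section Graph.
Variables (T : finType) (adj : rel T).

Definition nbhd (v : T) : {set T} := [set w | adj v w].

Definition cnbhd (S : {set T}) : {set T} :=
  S :|: [set w | [exists x in S, adj x w]].

Definition force_step (B : {set T}) : {set T} :=
  B :|: [set w | [exists v in B, (nbhd v :\: B) == [set w]]].

Definition zero_forcing (S : {set T}) : Prop :=
  exists n, iter n force_step S = [set: T].

Definition power_dominating (S : {set T}) : Prop := zero_forcing (cnbhd S).

Definition minimal_pds (S : {set T}) : Prop :=
  power_dominating S /\ forall S' : {set T}, S' \proper S -> ~ power_dominating S'.

Definition gammaP_irrelevant_vertex (v : T) : Prop :=
  forall S : {set T}, minimal_pds S -> v \notin S.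

Definition gammaP_irrelevant_set (X : {set T}) : Prop :=
  forall v, v \in X -> gammaP_irrelevant_vertex v.
End Graph.

(* G(r,l): K_r o K_1 with r - l leaves deleted.  Vertices: inl i (i < r) are
   the clique vertices, inr j (j < l) are the remaining leaves, leaf inr j
   being attached to clique vertex inl j. *)
Definition Gvert (r l : nat) : finType := ('I_r + 'I_l)%type.

Definition Gadj (r l : nat) : rel (Gvert r l) :=
  fun x y =>
    match x, y with
    | inl i, inl j => i != j
    | inl i, inr j => nat_of_ord i == nat_of_ord j
    | inr j, inl i => nat_of_ord i == nat_of_ord j
    | inr _, inr _ => false
    end.

Definition Gleaves (r l : nat) : {set Gvert r l} := [set x | if x is inr _ then true else false].

From mathcomp Require Import all_boot zify.

(* A set containing a clique vertex dominates the whole clique, after which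
   every clique vertex forces its own leaf, so it is power dominating.  A set
   of leaves is not: its closed neighbourhood lies in N[L], and N[L] is closed
   under forcing because each clique vertex in it still has the (at least two)
   leafless clique vertices as white neighbours.  Hence the minimal power
   dominating sets are exactly the singletons of clique vertices. *)

Set Implicit Arguments.
Unset Strict Implicit.
Unset Printing Implicit Defensive.

Section ZeroForcing.
Variables (T : finType) (adj : rel T).

Lemma cnbhd_mono (S S' : {set T}) :
  S \subset S' -> cnbhd adj S \subset cnbhd adj S'.
Proof.
move=> sSS'; apply/subsetP => x; rewrite /cnbhd !inE.
case/orP => [xS | /exists_inP[y yS yx]]; first by rewrite (subsetP sSS' _ xS).
by apply/orP; right; apply/exists_inP; exists y; rewrite ?(subsetP sSS' _ yS).
Qed.

Lemma force_step_mono (B B' : {set T}) :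
  B \subset B' -> force_step adj B \subset force_step adj B'.
Proof.
move=> sBB'; apply/subsetP => w; rewrite /force_step !inE.
case/orP => [wB | /exists_inP[v vB /eqP vw]]; first by rewrite (subsetP sBB' _ wB).
case: (boolP (w \in B')) => //= wB'; apply/exists_inP; exists v.
  exact: subsetP vB.
apply/eqP/setP => x; rewrite !inE.
case: (eqVneq x w) => [->|xw].
  by move: (set11 w); rewrite -vw !inE wB' => /andP[].
apply/negbTE/andP => -[xB' xv].
have : x \in nbhd adj v :\: B.
  by rewrite !inE xv andbT; apply: contra xB' => /(subsetP sBB').
by rewrite vw inE (negbTE xw).
Qed.

Lemma iter_force_step_stable (C B : {set T}) n :
  B \subset C -> force_step adj C \subset C ->
  iter n (force_step adj) B \subset C.
Proof.
move=> sBC sFC; elim: n => //= n IH.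
by apply: subset_trans sFC; apply: force_step_mono.
Qed.

Lemma zero_forcing_stable_setT (C S : {set T}) :
  S \subset C -> force_step adj C \subset C -> zero_forcing adj S -> C = [set: T].
Proof.
move=> sSC sFC [n fullS]; apply/eqP; rewrite eqEsubset subsetT -fullS.
exact: iter_force_step_stable.
Qed.

Lemma gammaP_irrelevant_setE (A : {set T}) :
  (forall S, power_dominating adj S <-> ~~ (S \subset ~: A)) ->
  forall X, gammaP_irrelevant_set adj X <-> X \subset ~: A.
Proof.
move=> pdsE X; split=> [irrX | sXA v vX S [pdsS minS]].
- apply/subsetP => a aX; rewrite inE; apply/negP => aA.
  have minA : minimal_pds adj [set a].
    split=> [|S /properP[]].
      by apply/pdsE/subsetPn; exists a; rewrite !inE ?negbK.
    rewrite subset1 => /orP[/eqP-> [b ->] // | /eqP-> _].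
    by rewrite pdsE => /negP; apply; apply: sub0set.
  by have := irrX a aX _ minA; rewrite set11.
- apply/negP => vS; have [a aS aA] := subsetPn ((pdsE S).1 pdsS).
  apply: (minS (S :\ v)); first exact: properD1.
  apply/pdsE/subsetPn; exists a => //; rewrite inE aS andbT.
  by rewrite in_set1; apply: contraNneq aA => ->; apply: subsetP vX.
Qed.

End ZeroForcing.

Section CoronaWithoutLeaves.
Variables r l : nat.
Local Notation V := (Gvert r l).
Local Notation adj := (@Gadj r l).

Lemma clique_vertex_pds (hlr : l <= r) (S : {set V}) (i : 'I_r) :
  inl i \in S -> power_dominating adj S.
Proof.
move=> iS; exists 1; set N := cnbhd adj S.
apply/eqP; rewrite eqEsubset subsetT; apply/subsetP => x _.
rewrite /force_step in_setU.
have cliqueN (k : 'I_r) : inl k \in N.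
  rewrite /N /cnbhd !inE; case: (eqVneq k i) => [->|ki]; first by rewrite iS.
  by apply/orP; right; apply/exists_inP; exists (inl i) => //=; rewrite eq_sym.
case: x => [k|j]; first by rewrite cliqueN.
case: (boolP (inr j \in N)) => //= jN.
have jr : j < r by have := ltn_ord j; lia.
rewrite in_set; apply/exists_inP; exists (inl (Ordinal jr)) => //.
apply/eqP/setP => -[k|j']; rewrite in_setD in_set1 /nbhd in_set /=.
  by rewrite cliqueN.
case: (eqVneq j' j) => [->|j'j]; first by rewrite jN !eqxx.
rewrite val_eqE eq_sym (negbTE j'j) andbF; apply/esym/eqP => -[]; exact/eqP.
Qed.

Lemma in_cnbhd_leaves (x : V) :
  (x \in cnbhd adj (Gleaves r l)) = if x is inl i then i < l else true.
Proof.
rewrite /cnbhd !inE; case: x => [i|j] //=.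
apply/exists_inP/idP => [[[a|j]] | il]; rewrite ?inE //=.
- by move=> _ /eqP->.
- by exists (inr (Ordinal il)); rewrite ?inE /=.
Qed.

Lemma cnbhd_leaves_force_stable (hlr : l.+2 <= r) :
  force_step adj (cnbhd adj (Gleaves r l)) \subset cnbhd adj (Gleaves r l).
Proof.
set C := cnbhd _ _; apply/subsetP => w; rewrite /force_step in_setU in_set.
case/orP => [// | /exists_inP[v vC /eqP vw]]; exfalso.
case: v vC vw => [i|j]; rewrite in_cnbhd_leaves => vC vw.
- have unforced (k : 'I_r) : l <= k -> inl k \in nbhd adj (inl i) :\: C.
    move=> lk; rewrite in_setD in_cnbhd_leaves /nbhd in_set /= -leqNgt lk.
    by apply/eqP => /(congr1 val) /= ik; lia.
  have r1 : r.-1 < r by lia.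
  have r2 : r.-2 < r by lia.
  have /set1P e1 : inl (Ordinal r1) \in [set w] by rewrite -vw unforced //=; lia.
  have /set1P e2 : inl (Ordinal r2) \in [set w] by rewrite -vw unforced //=; lia.
  by move: e1; rewrite -e2 => -[]; lia.
- have : w \in nbhd adj (inr j) :\: C by rewrite vw set11.
  rewrite in_setD /nbhd in_set; case: w {vw} => [i|b /andP[] //].
  by rewrite in_cnbhd_leaves /= => /andP[+ /eqP ij]; rewrite ij ltn_ord.
Qed.

Lemma leaves_not_pds (hlr : l.+2 <= r) (S : {set V}) :
  S \subset Gleaves r l -> ~ power_dominating adj S.
Proof.
move=> sSL /(zero_forcing_stable_setT (cnbhd_mono adj sSL)).
have r1 : r.-1 < r by lia.
move/(_ (cnbhd_leaves_force_stable hlr))/setP/(_ (inl (Ordinal r1))).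
by rewrite in_cnbhd_leaves inE /=; lia.
Qed.

Lemma power_dominatingE (hlr : l.+2 <= r) (S : {set V}) :
  power_dominating adj S <-> ~~ (S \subset Gleaves r l).
Proof.
split=> [pdsS | /subsetPn[[i|j] xS]]; rewrite ?inE //.
- by apply/negP => /(leaves_not_pds hlr); apply.
- by move=> _; apply: clique_vertex_pds xS; lia.
Qed.

End CoronaWithoutLeaves.

Theorem proposition2p21 (r l : nat) (hr : 3 <= r) (hl1 : 1 <= l) (hl2 : l <= r - 2)
  (X : {set Gvert r l}) :
  gammaP_irrelevant_set (@Gadj r l) X <-> X \subset Gleaves r l.
Proof.
rewrite -[Gleaves r l]setCK; apply: gammaP_irrelevant_setE => S.
by rewrite setCK; apply: power_dominatingE; lia.
Qed.
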